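(* Take $\Omega=(0,\infty)$. For any $\delta\in(0,1]$ and any interval $(\alpha,\beta]$ with $0\le\alpha<\beta\le1$, there exist a non-negative integer $m$ and intervals $I,J_1,\dots,J_m$ such that $$(\alpha,\beta]\preceq I\cup J_1\cup\dots\cup J_m,$$ $I\subseteq(0,\delta/2]$, $J_i\subseteq(\delta/2,1]$ for each $1\le i\le m$, and the lengths satisfy $$|I|+\sum_{i=1}^m|J_i|=\beta-\alpha,\qquad |I|>\frac{\delta}{4}(\beta-\alpha).$$
   Context: Let $\Omega$ be either $(0,\infty)$ or $D=\mathbb{C}\setminus\{0,-1,-2,\dots\}$. An admissible instance (relative to $\Omega$) is one of the following finite lists of points, all entries of which are required to lie in $\Omega$: (i) $(z+1,\,z)$ for $z\in\Omega$ with $z+1\in\Omega$ (corresponding to the identity $\Gamma(z+1)=z\Gamma(z)$); (ii) $(z,\,1-z)$ for $z\in\Omega\setminus\mathbb{Z}$ with $1-z\in\Omega$ (corresponding to $\Gamma(z)\Gamma(1-z)=\pi/\sin(\pi z)$); (iii) for an integer $n\ge 2$, $\big(z,\,\tfrac{z}{n},\,\tfrac{z+1}{n},\dots,\tfrac{z+n-1}{n}\big)$ (corresponding to Gauss's multiplication formula $(2\pi)^{(n-1)/2}n^{1/2-z}\Gamma(z)=\prod_{j=0}^{n-1}\Gamma(\tfrac{z+j}{n})$). For $B\subseteq\Omega$, a point $p\in\Omega$ is obtained from $B$ in one step if there is an admissible instance in which $p$ occurs exactly once as an entry and every other entry lies in $B$. Set $B_0=B$, $B_{i+1}=B_i\cup\{p: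 p \text{ obtained from } B_i \text{ in one step}\}$, and $\mathrm{Cl}_\Omega(B)=\bigcup_{i\ge0}B_i$ (the set of points at which the value of $\Gamma$ is determined by its values on $B$ via finitely many applications of the identities). For $A,B\subseteq\Omega$ write $A\preceq B$ if $A\subseteq \mathrm{Cl}_\Omega(B)$. A set $S\subseteq\Omega$ is a fundamental set (for $\Gamma$ on $\Omega$) if $\mathrm{Cl}_\Omega(S)=\Omega$. $|I|$ denotes the length of an interval $I$. *)

From Stdlib Require Import Reals List Lra.
Import ListNotations.
Open Scope R_scope.

Definition OmegaPos (x : R) : Prop := 0 < x.

Definition admissible (Om : R -> Prop) (l : list R) : Prop :=
  Forall Om l /\
  ( (exists z : R, l = [z + 1; z])
    \/ (exists z : R, (~ exists k : Z, z = IZR k) /\ l = [z; 1 - z])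
    \/ (exists (n : nat) (z : R), (2 <= n)%nat /\
          l = z :: map (fun j : nat => (z + INR j) / INR n) (seq 0 n)) ).

Definition once_others_in (B : R -> Prop) (p : R) (l : list R) : Prop :=
  exists l1 l2 : list R,
    l = l1 ++ p :: l2 /\ ~ In p l1 /\ ~ In p l2 /\ Forall B (l1 ++ l2).

Definition one_step (Om : R -> Prop) (B : R -> Prop) (p : R) : Prop :=
  Om p /\ exists l, admissible Om l /\ once_others_in B p l.

Fixpoint Biter (Om : R -> Prop) (B : R -> Prop) (i : nat) : R -> Prop :=
  match i with
  | O => B
  | S i' => fun p => Biter Om B i' p \/ one_step Om (Biter Om B i') p
  end.

Definition Cl (Om : R -> Prop) (B : R -> Prop) (p : R) : Prop :=
  exists i : nat, Biter Om B i p.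

Definition preceq (Om : R -> Prop) (A B : R -> Prop) : Prop :=
  forall x, A x -> Cl Om B x.

Record interval := mkInterval {
  lo : R; hi : R; lo_closed : bool; hi_closed : bool }.

Definition well_formed (I : interval) : Prop := lo I <= hi I.

Definition in_interval (I : interval) (x : R) : Prop :=
  (if lo_closed I then lo I <= x else lo I < x) /\
  (if hi_closed I then x <= hi I else x < hi I).

Definition ilength (I : interval) : R := hi I - lo I.

Definition subset (A B : R -> Prop) : Prop := forall x, A x -> B x.

Definition union_intervals (I : interval) (Js : list interval) (x : R) : Prop :=
  in_interval I x \/ exists J, In J Js /\ in_interval J x.

Definition sum_lengths (Js : list interval) : R :=
  fold_right (fun J s => ilength J + s) 0 Js.

Definition half_open (a b : R) (x : R) : Prop := a < x <= b.

From Stdlib Require Import Reals List Lra Lia.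
Import ListNotations.
Open Scope R_scope.

(* Gauss's duplication formula, i.e. the instance
   (z, z/2, (z+1)/2) of the multiplication formula with n = 2, shows that
   the value of Gamma at z > 0 is determined by its values at z/2 and
   (z+1)/2.  Applying this k times to a point of (a, b] ⊆ (0, 1] splits
   (a, b] into the "core" (a/2^k, b/2^k] and the k "tails"
   ((a/2^i + 1)/2, (b/2^i + 1)/2], i < k, which all lie in [1/2, 1];
   the core has length (b - a)/2^k and the lengths add up to b - a.
   Choosing k least with 2 beta <= 2^k delta puts the core inside
   (0, delta/2] while keeping 2^k delta < 4, i.e. |core| > delta/4 (b - a). *)

Lemma Biter_succ (B : R -> Prop) (i : nat) (x : R) :
  Biter OmegaPos B i x -> Biter OmegaPos B (S i) x.
Proof. now left. Qed.

Lemma Biter_mono (B : R -> Prop) (i j : nat) (x : R) :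
  (i <= j)%nat -> Biter OmegaPos B i x -> Biter OmegaPos B j x.
Proof.
  induction 1 as [|j _ IH]; intro Hx; [exact Hx | now apply Biter_succ, IH].
Qed.

Lemma Cl_base (B : R -> Prop) (x : R) : B x -> Cl OmegaPos B x.
Proof. now exists 0%nat. Qed.

(* Duplication as a single admissible step: for z > 0 with z <> 1, the
   point z occurs exactly once in (z, z/2, (z+1)/2). *)
Lemma duplication_step (B : R -> Prop) (z : R) :
  0 < z -> z <> 1 -> B (z / 2) -> B ((z + 1) / 2) -> one_step OmegaPos B z.
Proof.
  intros Hz Hz1 Hhalf Hshift.
  split; [exact Hz|].
  exists [z; z / 2; (z + 1) / 2]; split.
  - split.
    + repeat constructor; unfold OmegaPos; lra.
    + right; right; exists 2%nat, z; split; [lia|].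
      simpl; repeat f_equal; field.
  - exists [], [z / 2; (z + 1) / 2]; repeat split.
    + intros [].
    + intros [H | [H | []]]; lra.
    + repeat constructor; assumption.
Qed.

(* Cl is closed under duplication; at z = 1 the point (z+1)/2 is z itself. *)
Lemma Cl_duplication (B : R -> Prop) (z : R) :
  0 < z -> Cl OmegaPos B (z / 2) -> Cl OmegaPos B ((z + 1) / 2) ->
  Cl OmegaPos B z.
Proof.
  intros Hz [i Hi] [j Hj].
  destruct (Req_dec z 1) as [-> | Hz1].
  - exists j; replace 1 with ((1 + 1) / 2) by field; exact Hj.
  - exists (S (Nat.max i j)); right.
    apply duplication_step; try assumption.
    + apply (Biter_mono B i); [lia | exact Hi].
    + apply (Biter_mono B j); [lia | exact Hj].
Qed.

Definition oc (a b : R) : interval := mkInterval a b false true.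

Definition core (k : nat) (a b : R) : interval := oc (a / 2 ^ k) (b / 2 ^ k).

(* The tails ((a/2^i + 1)/2, (b/2^i + 1)/2] for i < k, split off by the
   successive duplications. *)
Fixpoint tails (k : nat) (a b : R) : list interval :=
  match k with
  | O => []
  | S k' => oc ((a + 1) / 2) ((b + 1) / 2) :: tails k' (a / 2) (b / 2)
  end.

Lemma pow2_pos (k : nat) : 0 < 2 ^ k.
Proof. apply pow_lt; lra. Qed.

Lemma core_halve (k : nat) (a b : R) : core k (a / 2) (b / 2) = core (S k) a b.
Proof.
  unfold core, oc; pose proof (pow2_pos k); simpl; f_equal; field; lra.
Qed.

Lemma duplication_cover (k : nat) : forall (a b : R) (B : R -> Prop),
  0 <= a ->
  subset (in_interval (core k a b)) (Cl OmegaPos B) ->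
  Forall (fun J => subset (in_interval J) (Cl OmegaPos B)) (tails k a b) ->
  subset (half_open a b) (Cl OmegaPos B).
Proof.
  induction k as [|k IH]; intros a b B Ha Hcore Htails z Hz.
  - apply Hcore; unfold core, in_interval; simpl; unfold Rdiv.
    rewrite Rinv_1, !Rmult_1_r; destruct Hz; split; assumption.
  - simpl in Htails; apply Forall_inv in Htails as Hfirst.
    apply Forall_inv_tail in Htails.
    apply Cl_duplication; [unfold half_open in Hz; lra | |].
    + apply (IH (a / 2) (b / 2)); [lra | | exact Htails |].
      * now rewrite core_halve.
      * unfold half_open in *; lra.
    + apply Hfirst; unfold in_interval; simpl; unfold half_open in Hz; lra.
Qed.

Lemma core_well_formed (k : nat) (a b : R) :
  a <= b -> well_formed (core k a b).
Proof.
  intro Hab; unfold well_formed, core; simpl.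
  apply Rmult_le_compat_r; [left; apply Rinv_0_lt_compat, pow2_pos | exact Hab].
Qed.

Lemma tails_well_formed (k : nat) : forall a b : R,
  a <= b -> Forall well_formed (tails k a b).
Proof.
  induction k as [|k IH]; intros a b Hab; constructor.
  - unfold well_formed; simpl; lra.
  - apply IH; lra.
Qed.

Lemma core_inside (k : nat) (a b c : R) :
  0 <= a -> b <= 2 ^ k * c -> subset (in_interval (core k a b)) (half_open 0 c).
Proof.
  intros Ha Hb x [Hlo Hhi]; simpl in Hlo, Hhi; unfold half_open.
  pose proof (pow2_pos k) as Hp.
  assert (0 <= a / 2 ^ k) by (unfold Rdiv; apply Rmult_le_pos; [lra | left; apply Rinv_0_lt_compat; lra]).
  assert (b / 2 ^ k <= c).
  { apply (Rmult_le_reg_r (2 ^ k)); [exact Hp|].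
    replace (b / 2 ^ k * 2 ^ k) with b by (field; lra); lra. }
  lra.
Qed.

(* For 0 <= a <= b <= 1 every tail lies in [1/2, 1] ⊆ (c/2, 1] for c <= 1. *)
Lemma tails_inside (k : nat) (c : R) : c <= 1 -> forall a b : R,
  0 <= a -> b <= 1 ->
  Forall (fun J => subset (in_interval J) (half_open (c / 2) 1)) (tails k a b).
Proof.
  intro Hc; induction k as [|k IH]; intros a b Ha Hb; constructor.
  - intros x [Hlo Hhi]; simpl in Hlo, Hhi; unfold half_open; lra.
  - apply IH; lra.
Qed.

Lemma core_length (k : nat) (a b : R) : ilength (core k a b) = (b - a) / 2 ^ k.
Proof. unfold ilength, core; simpl; field; apply pow_nonzero; lra. Qed.

Lemma core_tails_length (k : nat) : forall a b : R,
  ilength (core k a b) + sum_lengths (tails k a b) = b - a.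
Proof.
  induction k as [|k IH]; intros a b.
  - unfold ilength, core; simpl; field.
  - simpl; rewrite <- core_halve; specialize (IH (a / 2) (b / 2)).
    unfold ilength at 2; simpl; lra.
Qed.

Lemma least_dyadic_bound (x : R) :
  exists k : nat, x <= 2 ^ k /\ (k = 0%nat \/ 2 ^ k < 2 * x).
Proof.
  assert (Hbound : exists n : nat, x <= 2 ^ n).
  { destruct (Pow_x_infinity 2 ltac:(rewrite Rabs_pos_eq; lra) x) as [n Hn].
    exists n; specialize (Hn n (le_n n)).
    rewrite Rabs_pos_eq in Hn; [lra | left; apply pow2_pos]. }
  destruct Hbound as [n Hn]; induction n as [|n IH].
  - exists 0%nat; auto.
  - destruct (Rle_lt_dec x (2 ^ n)) as [Hle | Hlt].
    + exact (IH Hle).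
    + exists (S n); split; [exact Hn | right; simpl; lra].
Qed.

Theorem mainTheorem7 (delta alpha beta : R)
  (Hdelta : 0 < delta <= 1) (Hab : 0 <= alpha /\ alpha < beta /\ beta <= 1) :
  exists (I : interval) (Js : list interval),
    well_formed I /\ Forall well_formed Js /\
    preceq OmegaPos (half_open alpha beta) (union_intervals I Js) /\
    subset (in_interval I) (half_open 0 (delta / 2)) /\
    Forall (fun J => subset (in_interval J) (half_open (delta / 2) 1)) Js /\
    ilength I + sum_lengths Js = beta - alpha /\
    ilength I > delta / 4 * (beta - alpha).
Proof.
  destruct (least_dyadic_bound (2 * beta / delta)) as [k [Hk Hmin]].
  pose proof (pow2_pos k) as Hp.
  assert (Hfits : beta <= 2 ^ k * (delta / 2)).
  { apply (Rmult_le_compat_r delta) in Hk; [|lra].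
    replace (2 * beta / delta * delta) with (2 * beta) in Hk by (field; lra); lra. }
  assert (Hsmall : 2 ^ k * delta < 4).
  { destruct Hmin as [-> | Hmin]; [simpl; lra|].
    apply (Rmult_lt_compat_r delta) in Hmin; [|lra].
    replace (2 * (2 * beta / delta) * delta) with (4 * beta) in Hmin by (field; lra).
    lra. }
  exists (core k alpha beta), (tails k alpha beta).
  split; [|split; [|split; [|split; [|split; [|split]]]]].
  - apply core_well_formed; lra.
  - apply tails_well_formed; lra.
  - apply (duplication_cover k alpha beta); [lra | |].
    + intros x Hx; apply Cl_base; now left.
    + apply Forall_forall; intros J HJ x Hx; apply Cl_base; right; eauto.
  - apply core_inside; lra.
  - apply tails_inside; lra.
  - apply core_tails_length.
  - rewrite core_length; apply (Rmult_lt_reg_r (2 ^ k)); [exact Hp|].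
    replace ((beta - alpha) / 2 ^ k * 2 ^ k) with (beta - alpha) by (field; lra).
    replace (delta / 4 * (beta - alpha) * 2 ^ k)
      with (2 ^ k * delta * (beta - alpha) / 4) by field.
    assert (0 < beta - alpha) by lra; nra.
Qed.
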